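(* Let $\mathcal K\subset\mathbb R^d$ be compact and convex and let $f:\mathcal K\to\mathbb R$ be a proper convex function whose subgradients satisfy $\|\nabla f(x)\|_\ast\le G$ for all $x\in\mathcal K$. Run UniXGrad (defined in the context) with deterministic oracle, i.e. $g_t=\nabla f(\bar x_t)$ and $M_t=\nabla f(\tilde z_t)$ (subgradients). Then \[ f(\bar x_T)-\min_{x\in\mathcal K}f(x)\le \frac{7D\sqrt{1+\sum_{t=1}^T\alpha_t^2\|g_t-M_t\|_\ast^2}-D}{T^2}\le \frac{6D}{T^2}+\frac{14GD}{\sqrt T}. \]
   Context: Let $\|\cdot\|$ be a norm on $\mathbb R^d$ with dual norm $\|\cdot\|_\ast$. Let $\mathcal R:\mathcal K\to\mathbb R$ be differentiable and $1$-strongly convex w.r.t. $\|\cdot\|$, with Bregman divergence $D_{\mathcal R}(x,y)=\mathcal R(x)-\mathcal R(y)-\langle\nabla\mathcal R(y),x-y\rangle$, and let $D>0$ satisfy $D^2=\sup_{x,y\in\mathcal K}D_{\mathcal R}(x,y)$. UniXGrad: fix $T$, $y_0\in\mathcal K$, weights $\alpha_t=t$, $A_t=\sum_{i=1}^t\alpha_i$. For $t=1,\dots,T$: set $\tilde z_t=\frac{1}{A_t}\big(\alpha_t y_{t-1}+\sum_{i=1}^{t-1}\alpha_i x_i\big)$, obtain $M_t$ from the oracle at $\tilde z_t$, and with learning rate $\eta_t=\frac{2D}{\sqrt{1+\sum_{i=1}^{t-1}\alpha_i^2\|g_i-M_i\|_\ast^2}}$ compute $x_t=\arg\min_{x\in\mathcal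 K}\alpha_t\langle x,M_t\rangle+\frac1{\eta_t}D_{\mathcal R}(x,y_{t-1})$; then set $\bar x_t=\frac1{A_t}\sum_{i=1}^t\alpha_i x_i$, obtain $g_t$ from the oracle at $\bar x_t$, and compute $y_t=\arg\min_{y\in\mathcal K}\alpha_t\langle y,g_t\rangle+\frac1{\eta_t}D_{\mathcal R}(y,y_{t-1})$. Output $\bar x_T$. *)

From Stdlib Require Import Reals.
From mathcomp Require Import all_boot.
Set Implicit Arguments. Unset Strict Implicit. Unset Printing Implicit Defensive.

Open Scope R_scope.

Definition vec (d : nat) := 'I_d -> R.

Definition inner (d : nat) (x y : vec d) : R := \big[Rplus/0]_(i < d) (x i * y i).
Definition vadd (d : nat) (x y : vec d) : vec d := fun i => x i + y i.
Definition vsub (d : nat) (x y : vec d) : vec d := fun i => x i - y i.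
Definition vscal (d : nat) (a : R) (x : vec d) : vec d := fun i => a * x i.
Definition comb (d : nat) (t : R) (x y : vec d) : vec d := vadd (vscal t x) (vscal (1 - t) y).

Definition is_norm (d : nat) (N : vec d -> R) : Prop :=
  (forall x, 0 <= N x) /\
  (forall x, N x = 0 -> forall i, x i = 0) /\
  (forall a x, N (vscal a x) = Rabs a * N x) /\
  (forall x y, N (vadd x y) <= N x + N y).

Definition is_dual_norm (d : nat) (N Nst : vec d -> R) : Prop :=
  forall g, is_lub (fun r => exists x, N x <= 1 /\ r = inner g x) (Nst g).

Definition convex_set (d : nat) (K : vec d -> Prop) : Prop :=
  forall x y t, K x -> K y -> 0 <= t <= 1 -> K (comb t x y).

(* compactness in R^d (Heine-Borel): closed and bounded, for the standard
   (coordinatewise) topology, which all norms on R^d induce *)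
Definition closed_set (d : nat) (K : vec d -> Prop) : Prop :=
  forall (u : nat -> vec d) (p : vec d),
    (forall n, K (u n)) -> (forall i, Un_cv (fun n => u n i) (p i)) -> K p.
Definition bounded_set (d : nat) (K : vec d -> Prop) : Prop :=
  exists B, forall x, K x -> forall i, Rabs (x i) <= B.
Definition compact_set (d : nat) (K : vec d -> Prop) : Prop :=
  closed_set K /\ bounded_set K.

Definition convex_on (d : nat) (K : vec d -> Prop) (f : vec d -> R) : Prop :=
  forall x y t, K x -> K y -> 0 <= t <= 1 -> f (comb t x y) <= t * f x + (1 - t) * f y.

Definition is_subgradient (d : nat) (K : vec d -> Prop) (f : vec d -> R) (x g : vec d) : Prop :=
  forall y, K y -> f x + inner g (vsub y x) <= f y.

Definition differentiable_on (d : nat) (N : vec d -> R) (K : vec d -> Prop)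
  (Rg : vec d -> R) (gR : vec d -> vec d) : Prop :=
  forall y, K y -> forall eps, 0 < eps -> exists delta, 0 < delta /\
    forall x, K x -> N (vsub x y) < delta ->
      Rabs (Rg x - Rg y - inner (gR y) (vsub x y)) <= eps * N (vsub x y).

Definition strongly_convex_on (d : nat) (N : vec d -> R) (K : vec d -> Prop) (Rg : vec d -> R) : Prop :=
  forall x y t, K x -> K y -> 0 <= t <= 1 ->
    Rg (comb t x y) <= t * Rg x + (1 - t) * Rg y - t * (1 - t) / 2 * (N (vsub x y)) ^ 2.

Definition bregman (d : nat) (Rg : vec d -> R) (gR : vec d -> vec d) (x y : vec d) : R :=
  Rg x - Rg y - inner (gR y) (vsub x y).

Definition is_bregman_diameter (d : nat) (K : vec d -> Prop) (Rg : vec d -> R)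
  (gR : vec d -> vec d) (D : R) : Prop :=
  0 < D /\ is_lub (fun r => exists x y, K x /\ K y /\ r = bregman Rg gR x y) (D ^ 2).

Fixpoint sum1 (F : nat -> R) (n : nat) : R :=
  match n with O => 0 | S m => sum1 F m + F (S m) end.

Definition alpha (t : nat) : R := INR t.
Definition A (t : nat) : R := sum1 alpha t.

Definition is_minimizer (d : nat) (K : vec d -> Prop) (phi : vec d -> R) (x : vec d) : Prop :=
  K x /\ forall u, K u -> phi x <= phi u.

Definition unixgrad_run (d : nat) (Nst : vec d -> R) (K : vec d -> Prop)
  (Rg : vec d -> R) (gR : vec d -> vec d) (D : R) (oracle : vec d -> vec d)
  (T : nat) (y0 : vec d) (x y ztil xbar M g : nat -> vec d) (eta : nat -> R) : Prop :=
  y 0%nat = y0 /\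
  forall t : nat, (1 <= t <= T)%N ->
    ztil t = (fun k => / A t * (alpha t * y (t - 1)%N k
                                 + sum1 (fun i => alpha i * x i k) (t - 1)%N)) /\
    M t = oracle (ztil t) /\
    eta t = 2 * D / sqrt (1 + sum1 (fun i => alpha i ^ 2 * (Nst (vsub (g i) (M i))) ^ 2) (t - 1)%N) /\
    is_minimizer K (fun u => alpha t * inner u (M t) + / eta t * bregman Rg gR u (y (t - 1)%N)) (x t) /\
    xbar t = (fun k => / A t * sum1 (fun i => alpha i * x i k) t) /\
    g t = oracle (xbar t) /\
    is_minimizer K (fun u => alpha t * inner u (g t) + / eta t * bregman Rg gR u (y (t - 1)%N)) (y t).

(* Each round of UniXGrad consists of two Bregman prox steps from y_{t-1}, one with the
   guess M_t (giving x_t) and one with the gradient g_t (giving y_t).  The three-point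
   inequality for prox steps, with 1-strong convexity of R absorbing the optimism error
   alpha_t <g_t - M_t, x_t - y_t>, bounds the linearised regret of round t against u by a
   telescoping term scale/(2D) * D_R(u, y_t) plus 3D times the increase of
   scale = sqrt (1 + sum alpha_i^2 ||g_i - M_i||_*^2).  The anytime online-to-batch
   conversion (subgradient inequality at the weighted average xbar_t) turns the linearised
   regret into the increase of A_t (f(xbar_t) - f u).  Hence
   A_t (f(xbar_t) - f u) + scale_t/(2D) D_R(u, y_t) - 3D scale_t is nonincreasing in t,
   and A_T >= T^2/2 gives the first bound; the second follows from
   ||g_t - M_t||_* <= 2G and alpha_t <= T. *)

From Stdlib Require Import Reals Lra Psatz FunctionalExtensionality.
From mathcomp Require Import all_boot zify.
Set Implicit Arguments. Unset Strict Implicit.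
Open Scope R_scope.

Lemma big_Rplus_lin n (F G : 'I_n -> R) a b :
  \big[Rplus/0]_(i < n) (a * F i + b * G i)
  = a * \big[Rplus/0]_(i < n) F i + b * \big[Rplus/0]_(i < n) G i.
Proof.
elim: n F G => [|n IHn] F G; first by rewrite !big_ord0; ring.
by rewrite !big_ord_recl IHn; ring.
Qed.

Section Inner.
Variable d : nat.
Implicit Types x y z : vec d.

Lemma inner_ext x x' y y' :
  (forall i, x i = x' i) -> (forall i, y i = y' i) -> inner x y = inner x' y'.
Proof. by move=> Ex Ey; apply: eq_bigr => i _; rewrite Ex Ey. Qed.

Lemma inner_comm x y : inner x y = inner y x.
Proof. by apply: eq_bigr => i _; ring. Qed.

Lemma inner_linr a b x y z :
  inner z (fun i => a * x i + b * y i) = a * inner z x + b * inner z y.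
Proof. by rewrite /inner -big_Rplus_lin; apply: eq_bigr => i _; ring. Qed.

Lemma inner_scalr a x z : inner z (vscal a x) = a * inner z x.
Proof.
rewrite -[RHS]Rplus_0_r -(Rmult_0_l (inner z x)) -inner_linr.
by apply: inner_ext => // i; rewrite /vscal; ring.
Qed.

Lemma inner_subr x y z : inner z (vsub x y) = inner z x - inner z y.
Proof.
rewrite (_ : _ - _ = 1 * inner z x + (-1) * inner z y); last by ring.
by rewrite -inner_linr; apply: inner_ext => // i; rewrite /vsub; ring.
Qed.

Lemma inner_subl x y z : inner (vsub x y) z = inner x z - inner y z.
Proof. by rewrite inner_comm inner_subr !(inner_comm z). Qed.

Lemma inner_comb_subl s x v z :
  inner z (vsub (comb s v x) x) = s * inner z (vsub v x).
Proof.
by rewrite -inner_scalr; apply: inner_ext => // i; rewrite /comb /vadd /vscal /vsub; ring.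
Qed.

End Inner.

Section Norm.
Variables (d : nat) (N Nst : vec d -> R).
Hypothesis HN : is_norm N.
Implicit Types x y v : vec d.

Lemma norm_ext x y : (forall i, x i = y i) -> N x = N y.
Proof. by move=> Exy; rewrite (functional_extensionality _ _ Exy). Qed.

Lemma norm_ge0 x : 0 <= N x.
Proof. by case: HN. Qed.

Lemma normZ a x : N (vscal a x) = Rabs a * N x.
Proof. by case: HN => _ [_ []]. Qed.

Lemma normB_sym x y : N (vsub x y) = N (vsub y x).
Proof.
rewrite (@norm_ext (vsub x y) (vscal (-1) (vsub y x))); last by move=> i; rewrite /vscal /vsub; ring.
by rewrite normZ Rabs_Ropp Rabs_R1 Rmult_1_l.
Qed.

Lemma norm_comb_sub s x v : 0 <= s -> N (vsub (comb s v x) x) = s * N (vsub v x).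
Proof.
move=> s_ge0; rewrite (@norm_ext _ (vscal s (vsub v x))).
  by rewrite normZ Rabs_pos_eq.
by move=> i; rewrite /comb /vadd /vscal /vsub; ring.
Qed.

Hypothesis HNst : is_dual_norm N Nst.

Lemma dual_norm_ge0 w : 0 <= Nst w.
Proof.
case: (HNst w) => ub_w _; apply: ub_w; exists (vscal 0 w); split.
  by rewrite normZ Rabs_R0 Rmult_0_l; lra.
by rewrite inner_scalr Rmult_0_l.
Qed.

Lemma inner_le_dual_norm w x : inner w x <= Nst w * N x.
Proof.
have [Nx0 | Nx_gt0] : N x = 0 \/ 0 < N x by have := norm_ge0 x; lra.
  have x0 i : x i = 0 by case: HN => _ [/(_ x Nx0)].
  suff -> : inner w x = inner w (vscal 0 x) by rewrite inner_scalr Nx0; lra.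
  by apply: inner_ext => // i; rewrite /vscal x0; ring.
case: (HNst w) => ub_w _.
have : inner w (vscal (/ N x) x) <= Nst w.
  apply: ub_w; exists (vscal (/ N x) x); split=> //.
  rewrite normZ Rabs_pos_eq; last by left; apply: Rinv_0_lt_compat.
  by rewrite Rinv_l; lra.
rewrite inner_scalr => H.
apply: (Rmult_le_reg_l (/ N x)); first exact: Rinv_0_lt_compat.
by rewrite (Rmult_comm (Nst w)) -Rmult_assoc Rinv_l; lra.
Qed.

Lemma inner_cross_le_dual_norm w w' x y :
  inner x w - inner y w - inner x w' + inner y w' <= Nst (vsub w w') * N (vsub x y).
Proof.
have -> : inner x w - inner y w - inner x w' + inner y w' = inner (vsub w w') (vsub x y).
  by rewrite inner_subl !inner_subr !(inner_comm x) !(inner_comm y); ring.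
exact: inner_le_dual_norm.
Qed.

Lemma dual_normB w w' : Nst (vsub w w') <= Nst w + Nst w'.
Proof.
case: (HNst (vsub w w')) => _; apply=> _ [x [Nx1 ->]].
case: (HNst w) => ub_w _; case: (HNst w') => ub_w' _.
have H1 : inner w x <= Nst w by apply: ub_w; exists x.
have H2 : inner w' (vscal (-1) x) <= Nst w'.
  apply: ub_w'; exists (vscal (-1) x); split=> //.
  by rewrite normZ Rabs_Ropp Rabs_R1 Rmult_1_l.
rewrite inner_scalr in H2; rewrite inner_subl; lra.
Qed.

End Norm.

Section Bregman.
Variables (d : nat) (N : vec d -> R) (K : vec d -> Prop) (Rg : vec d -> R) (gR : vec d -> vec d).
Hypotheses (HN : is_norm N) (HK : convex_set K) (Hdiff : differentiable_on N K Rg gR).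
Implicit Types x v : vec d.

Lemma secant_slope_approx x v e smax : K x -> K v -> 0 < e -> 0 < smax ->
  exists s, [/\ 0 < s <= 1, s <= smax, K (comb s v x) &
    Rabs (Rg (comb s v x) - Rg x - s * inner (gR x) (vsub v x)) <= s * e].
Proof.
move=> Kx Kv e_gt0 smax_gt0.
set n := N (vsub v x); have n_ge0 : 0 <= n by apply: norm_ge0.
have eps_gt0 : 0 < e / (n + 1) by apply: Rdiv_lt_0_compat; lra.
have [del [del_gt0 Hdel]] := Hdiff Kx eps_gt0.
set s := Rmin (Rmin 1 smax) (del / (2 * (n + 1))).
have s_gt0 : 0 < s.
  apply: Rmin_glb_lt; first by apply: Rmin_glb_lt; lra.
  by apply: Rdiv_lt_0_compat; lra.
have s_le1 : s <= 1 by apply: Rle_trans (Rmin_l _ _) (Rmin_l _ _).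
have s_small : s * (2 * (n + 1)) <= del.
  have : s <= del / (2 * (n + 1)) by apply: Rmin_r.
  move=> H; apply: (Rmult_le_reg_r (/ (2 * (n + 1)))); first by apply: Rinv_0_lt_compat; lra.
  by rewrite Rmult_assoc Rinv_r ?Rmult_1_r; lra.
have Kc : K (comb s v x) by apply: HK => //; lra.
exists s; split=> //; first by apply: Rle_trans (Rmin_l _ _) (Rmin_r _ _).
have Nc : N (vsub (comb s v x) x) = s * n by apply: norm_comb_sub => //; lra.
have := Hdel _ Kc ltac:(rewrite Nc; nra).
rewrite inner_comb_subl Nc => H; apply: Rle_trans H _.
have -> : e / (n + 1) * (s * n) = s * e * (n / (n + 1)) by field; lra.
have : n / (n + 1) <= 1 by apply: (Rmult_le_reg_r (n + 1)); [lra | rewrite /Rdiv Rmult_assoc Rinv_l; lra].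
have : 0 <= s * e by nra.
nra.
Qed.

Hypothesis Hsc : strongly_convex_on N K Rg.

Lemma bregman_ge_half_sq a b : K a -> K b -> N (vsub a b) ^ 2 / 2 <= bregman Rg gR a b.
Proof.
move=> Ka Kb; apply: Rle_plus_epsilon => e e_gt0.
set n := N (vsub a b).
have [s [[s_gt0 s_le1] s_small _ Hs]] :=
  @secant_slope_approx b a (e / 2) (e / (n ^ 2 + 1)) Kb Ka ltac:(lra)
    ltac:(apply: Rdiv_lt_0_compat; nra).
have sn2 : s * n ^ 2 <= e.
  have : s * (n ^ 2 + 1) <= e.
    apply: (Rmult_le_reg_r (/ (n ^ 2 + 1))); first by apply: Rinv_0_lt_compat; nra.
    by rewrite Rmult_assoc Rinv_r ?Rmult_1_r; nra.
  nra.
have := Hsc Ka Kb (conj (Rlt_le _ _ s_gt0) s_le1).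
have := Rle_abs (- (Rg (comb s a b) - Rg b - s * inner (gR b) (vsub a b))).
rewrite Rabs_Ropp /bregman -/n => H1 H2.
have : s * (n ^ 2 / 2 - e) <= s * (Rg a - Rg b - inner (gR b) (vsub a b)) by nra.
move/(Rmult_le_reg_l _ _ _ s_gt0); lra.
Qed.

Lemma bregman_three_point v x yp :
  bregman Rg gR v yp - bregman Rg gR v x - bregman Rg gR x yp
  = inner (vsub (gR x) (gR yp)) (vsub v x).
Proof. rewrite /bregman inner_subl !inner_subr; ring. Qed.

(* Compare x with the feasible points comb s v x for small s > 0. *)
Lemma prox_optimality a c w yp x v : 0 <= c -> K v ->
  is_minimizer K (fun u => a * inner u w + c * bregman Rg gR u yp) x ->
  0 <= a * inner (vsub v x) w + c * inner (vsub (gR x) (gR yp)) (vsub v x).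
Proof.
move=> c_ge0 Kv [Kx xmin].
apply: Rle_plus_epsilon => e e_gt0.
have [s [[s_gt0 _] _ Kc Hs]] := @secant_slope_approx x v (e / (c + 1)) 1 Kx Kv ltac:(apply: Rdiv_lt_0_compat; lra) ltac:(lra).
have Ew : inner (comb s v x) w - inner x w = s * inner (vsub v x) w.
  by rewrite -inner_subl inner_comm inner_comb_subl inner_comm.
have Eyp : inner (gR yp) (vsub (comb s v x) yp) - inner (gR yp) (vsub x yp)
    = s * inner (gR yp) (vsub v x).
  by rewrite -inner_comb_subl !inner_subr; ring.
have := xmin _ Kc; rewrite /= /bregman => Hmin.
have Hsec := Rle_abs (Rg (comb s v x) - Rg x - s * inner (gR x) (vsub v x)).
have ce : c * (e / (c + 1)) <= e.
  rewrite /Rdiv -Rmult_assoc; apply: (Rmult_le_reg_r (c + 1)); first lra.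
  by rewrite Rmult_assoc Rinv_l; nra.
have : 0 <= s * (a * inner (vsub v x) w
   + c * (inner (gR x) (vsub v x) - inner (gR yp) (vsub v x)) + c * (e / (c + 1))).
  nra.
rewrite [inner (vsub (gR x) _) _]inner_subl; nra.
Qed.

Lemma mirror_step_three_point a c w yp x v : 0 <= c -> K v ->
  is_minimizer K (fun u => a * inner u w + c * bregman Rg gR u yp) x ->
  a * inner x w + c * bregman Rg gR x yp + c * bregman Rg gR v x
  <= a * inner v w + c * bregman Rg gR v yp.
Proof.
move=> c_ge0 Kv xmin; have := prox_optimality c_ge0 Kv xmin.
rewrite -bregman_three_point [inner (vsub v x) w]inner_subl; nra.
Qed.
End Bregman.

Lemma bregman_le_diam d (K : vec d -> Prop) Rg gR D a b : is_bregman_diameter K Rg gR D ->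
  K a -> K b -> bregman Rg gR a b <= D ^ 2.
Proof. by case=> _ [ub _] Ka Kb; apply: ub; exists a, b. Qed.

Lemma A_S t : A t.+1 = A t + alpha t.+1.
Proof. by []. Qed.

Lemma A_closed t : A t = INR t * (INR t + 1) / 2.
Proof.
elim: t => [|t IHt]; first by rewrite /A /=; field.
by rewrite A_S IHt /alpha S_INR; field.
Qed.

Lemma A_gt0 t : (0 < t)%N -> 0 < A t.
Proof.
move=> t_gt0; rewrite A_closed.
have : 1 <= INR t by apply: (le_INR 1); lia.
nra.
Qed.

Section WeightedAverage.
Variables (d : nat) (K : vec d -> Prop).
Hypothesis HK : convex_set K.

(* For m = 0 the point b (in practice xbar 0) is arbitrary, as its weight A 0 is 0. *)
Lemma convex_weighted_step m (a b c : vec d) : K a -> ((0 < m)%N -> K b) ->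
  (forall k, A m.+1 * c k = A m * b k + alpha m.+1 * a k) -> K c.
Proof.
move=> Ka Kb Ec.
case: m Kb Ec => [_ | m Kb] Ec.
  suff -> : c = a by [].
  apply: functional_extensionality => k; move: (Ec k).
  by rewrite /A /alpha /=; lra.
have Am_gt0 : 0 < A m.+1 by apply: A_gt0.
have Am'_gt0 : 0 < A m.+2 by apply: A_gt0.
have al_ge0 : 0 <= alpha m.+2 by apply: pos_INR.
have -> : c = comb (alpha m.+2 / A m.+2) a b.
  apply: functional_extensionality => k; rewrite /comb /vadd /vscal.
  apply: (Rmult_eq_reg_l (A m.+2)); last lra.
  by rewrite Ec (A_S m.+1); field; rewrite -A_S; lra.
apply: HK => //; first exact: Kb.
rewrite (A_S m.+1); split.
  by apply: Rmult_le_pos; last by left; apply: Rinv_0_lt_compat; lra.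
by apply: (Rmult_le_reg_r (A m.+1 + alpha m.+2)); [lra | rewrite /Rdiv Rmult_assoc Rinv_l; lra].
Qed.

End WeightedAverage.

Lemma sum1_ge0 (F : nat -> R) n : (forall t, 0 <= F t) -> 0 <= sum1 F n.
Proof. by move=> F_ge0; elim: n => [|n IHn] /=; [lra | have := F_ge0 n.+1; lra]. Qed.

Lemma sum1_le (F : nat -> R) C n :
  (forall t, (1 <= t <= n)%N -> F t <= C) -> sum1 F n <= INR n * C.
Proof.
elim: n => [|n IHn] F_le; first by rewrite /=; lra.
change (sum1 F n + F n.+1 <= INR n.+1 * C); rewrite S_INR.
have := F_le n.+1 ltac:(lia).
have := IHn (fun t Ht => F_le t ltac:(lia)); lra.
Qed.

(* AM-GM, together with a^2 = P^2 - Pm^2 <= 2 P (P - Pm). *)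
Lemma adaptive_young D P Pm a r : 0 < D -> 0 < P -> Pm <= P -> P ^ 2 = Pm ^ 2 + a ^ 2 ->
  a * r - P / (2 * D) * (r ^ 2 / 2) <= 2 * D * (P - Pm).
Proof.
move=> D_gt0 P_gt0 Pm_le sqP.
have DP_gt0 : 0 < 4 * D * P by nra.
apply: (Rmult_le_reg_l _ _ _ DP_gt0).
have -> : 4 * D * P * (a * r - P / (2 * D) * (r ^ 2 / 2)) = 4 * D * P * a * r - P ^ 2 * r ^ 2.
  by field; lra.
have : 0 <= (2 * D * a - P * r) ^ 2 by apply: pow2_ge_0.
have : a ^ 2 <= 2 * P * (P - Pm) by nra.
nra.
Qed.

Lemma adaptive_step_bound D P Pm a r b B : 0 < D -> 1 <= Pm <= P -> P ^ 2 = Pm ^ 2 + a ^ 2 ->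
  B <= D ^ 2 -> r ^ 2 / 2 <= b <= D ^ 2 ->
  (P - Pm) / (2 * D) * B - Pm / (2 * D) * b + a * r <= 3 * D * (P - Pm).
Proof.
move=> D_gt0 [Pm_ge1 Pm_le] sqP B_le [b_ge b_le].
have young := @adaptive_young D P Pm a r D_gt0 ltac:(lra) Pm_le sqP.
have inv2D_gt0 : 0 < / (2 * D) by apply: Rinv_0_lt_compat; lra.
have h_ge0 : 0 <= (P - Pm) / (2 * D) by apply: Rmult_le_pos; lra.
have hD : (P - Pm) / (2 * D) * D ^ 2 = (P - Pm) * D / 2 by field; lra.
have := Rmult_le_compat_l _ _ _ h_ge0 B_le.
have := Rmult_le_compat_l _ _ _ h_ge0 b_le.
have : P / (2 * D) * (r ^ 2 / 2) <= P / (2 * D) * b.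
  by apply: Rmult_le_compat_l => //; apply: Rmult_le_pos; lra.
rewrite hD; lra.
Qed.

Section UniXGrad.
Variables (d : nat) (N Nst : vec d -> R) (K : vec d -> Prop) (f : vec d -> R)
  (oracle : vec d -> vec d) (G : R) (Rg : vec d -> R) (gR : vec d -> vec d) (D : R)
  (T : nat) (y0 : vec d) (x y ztil xbar M g : nat -> vec d) (eta : nat -> R).
Hypotheses (HN : is_norm N) (HNst : is_dual_norm N Nst) (HK : convex_set K)
  (Hdiff : differentiable_on N K Rg gR) (Hsc : strongly_convex_on N K Rg)
  (HBD : is_bregman_diameter K Rg gR D)
  (Horacle : forall u, K u -> is_subgradient K f u (oracle u) /\ Nst (oracle u) <= G)
  (Ky0 : K y0) (Hrun : unixgrad_run Nst K Rg gR D oracle T y0 x y ztil xbar M g eta).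

Definition gap_sum (k : nat) : R :=
  sum1 (fun t => alpha t ^ 2 * Nst (vsub (g t) (M t)) ^ 2) k.

(* The step size of round t is eta t = 2 D / scale (t - 1). *)
Definition scale (k : nat) : R := sqrt (1 + gap_sum k).

Lemma gap_sum_ge0 k : 0 <= gap_sum k.
Proof. by apply: sum1_ge0 => t; apply: Rmult_le_pos; apply: pow2_ge_0. Qed.

Lemma scale_sq k : scale k ^ 2 = 1 + gap_sum k.
Proof. by rewrite pow2_sqrt //; have := gap_sum_ge0 k; lra. Qed.

Lemma gap_sumS k :
  gap_sum k.+1 = gap_sum k + (alpha k.+1 * Nst (vsub (g k.+1) (M k.+1))) ^ 2.
Proof. by rewrite /gap_sum /=; ring. Qed.

Lemma scaleS k : scale k.+1 ^ 2 = scale k ^ 2 + (alpha k.+1 * Nst (vsub (g k.+1) (M k.+1))) ^ 2.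
Proof. by rewrite !scale_sq gap_sumS; ring. Qed.

Lemma scale_ge1 k : 1 <= scale k.
Proof. by rewrite /scale -[X in X <= _]sqrt_1; apply: sqrt_le_1_alt; have := gap_sum_ge0 k; lra. Qed.

Lemma scale_le_S k : scale k <= scale k.+1.
Proof.
rewrite /scale gap_sumS; apply: sqrt_le_1_alt.
by have := pow2_ge_0 (alpha k.+1 * Nst (vsub (g k.+1) (M k.+1))); lra.
Qed.

Lemma scale0 : scale 0 = 1.
Proof. by rewrite /scale /= Rplus_0_r sqrt_1. Qed.

Lemma D_gt0 : 0 < D.
Proof. by case: HBD. Qed.

Lemma bregman_ge0 a b : K a -> K b -> 0 <= bregman Rg gR a b.
Proof.
move=> Ka Kb; have := bregman_ge_half_sq HN HK Hdiff Hsc Ka Kb.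
by have := pow2_ge_0 (N (vsub a b)); lra.
Qed.

Lemma x_in_K t : (1 <= t <= T)%N -> K (x t).
Proof. by case: Hrun => _ /[apply] [[_ [_ [_ [[]]]]]]. Qed.

Lemma y_in_K t : (t <= T)%N -> K (y t).
Proof.
case: t => [_ | t Ht]; first by case: Hrun => ->.
by case: Hrun => _ /(_ t.+1 ltac:(lia)) [_ [_ [_ [_ [_ [_ []]]]]]].
Qed.

Lemma xbar_weighted t : (t <= T)%N ->
  forall k, A t * xbar t k = sum1 (fun i => alpha i * x i k) t.
Proof.
case: t => [_ k | t Ht k]; first by rewrite /A /=; ring.
case: Hrun => _ /(_ t.+1 ltac:(lia)) [_ [_ [_ [_ [-> _]]]]].
by field; have := A_gt0 (ltn0Sn t); lra.
Qed.

Lemma xbar_step m : (m < T)%N ->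
  forall k, A m.+1 * xbar m.+1 k = A m * xbar m k + alpha m.+1 * x m.+1 k.
Proof. by move=> Hm k; rewrite !xbar_weighted //; apply: ltnW. Qed.

Lemma xbar_in_K t : (1 <= t <= T)%N -> K (xbar t).
Proof.
elim: t => [|m IHm] Hm; first by lia.
apply: (convex_weighted_step HK (m := m) (a := x m.+1) (b := xbar m)).
- exact: x_in_K.
- by move=> m_gt0; apply: IHm; lia.
- by apply: xbar_step; lia.
Qed.

Lemma ztil_in_K t : (1 <= t <= T)%N -> K (ztil t).
Proof.
case: t => [|m] Hm; first by lia.
apply: (convex_weighted_step HK (m := m) (a := y m) (b := xbar m)).
- by apply: y_in_K; lia.
- by move=> m_gt0; apply: xbar_in_K; lia.
move=> k; case: Hrun => _ /(_ m.+1 Hm) [-> _].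
rewrite subSS subn0 -(xbar_weighted (t := m)); last by lia.
by field; have := A_gt0 (ltn0Sn m); lra.
Qed.

Lemma G_ge0 : 0 <= G.
Proof. by have [_] := Horacle Ky0; have := dual_norm_ge0 HN HNst (oracle y0); lra. Qed.

Lemma gradient_gap_le t : (1 <= t <= T)%N -> Nst (vsub (g t) (M t)) <= 2 * G.
Proof.
move=> Ht; case: Hrun => _ /(_ t Ht) [_ [-> [_ [_ [_ [-> _]]]]]].
have [_ ?] := Horacle (xbar_in_K Ht); have [_ ?] := Horacle (ztil_in_K Ht).
by have := dual_normB HN HNst (oracle (xbar t)) (oracle (ztil t)); lra.
Qed.

Lemma online_to_batch_step u m : K u -> (m < T)%N ->
  A m.+1 * (f (xbar m.+1) - f u) - A m * (f (xbar m) - f u)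
  <= alpha m.+1 * (inner (x m.+1) (g m.+1) - inner u (g m.+1)).
Proof.
move=> Ku Hm; have Hm1 : (1 <= m.+1 <= T)%N by lia.
have g_def : g m.+1 = oracle (xbar m.+1).
  by case: Hrun => _ /(_ m.+1 Hm1) [_ [_ [_ [_ [_ [-> _]]]]]].
have [sub_g _] := Horacle (xbar_in_K Hm1); rewrite -g_def in sub_g.
have sub_u := sub_g u Ku.
have sub_prev : A m * (f (xbar m.+1) + inner (g m.+1) (vsub (xbar m) (xbar m.+1))) <= A m * f (xbar m).
  have [-> | m_gt0] := posnP m; first by rewrite /A /=; lra.
  by apply: Rmult_le_compat_l; [apply: Rlt_le; apply: A_gt0 | apply: sub_g; apply: xbar_in_K; lia].
have avg : alpha m.+1 * inner (g m.+1) (x m.+1)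
    = A m.+1 * inner (g m.+1) (xbar m.+1) - A m * inner (g m.+1) (xbar m).
  rewrite (_ : _ - _ = A m.+1 * inner (g m.+1) (xbar m.+1) + (- A m) * inner (g m.+1) (xbar m)); last by ring.
  rewrite -inner_linr -inner_scalr; apply: inner_ext => // k.
  by rewrite /vscal xbar_step //; ring.
have al_ge0 : 0 <= alpha m.+1 by apply: pos_INR.
rewrite inner_subr in sub_u; rewrite inner_subr in sub_prev.
have := Rmult_le_compat_l _ _ _ al_ge0 sub_u.
rewrite !(inner_comm _ (g m.+1)) A_S; rewrite A_S in avg.
nra.
Qed.

Lemma optimistic_round_regret u m : K u -> (m < T)%N ->
  alpha m.+1 * (inner (x m.+1) (g m.+1) - inner u (g m.+1))
  <= scale m / (2 * D) * bregman Rg gR u (y m)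
     - scale m.+1 / (2 * D) * bregman Rg gR u (y m.+1) + 3 * D * (scale m.+1 - scale m).
Proof.
move=> Ku Hm; have Hm1 : (1 <= m.+1 <= T)%N by lia.
have [_ /(_ m.+1 Hm1) [_ [_ [eta_def [xmin [_ [_ ymin]]]]]]] := Hrun.
rewrite subSS subn0 in eta_def xmin ymin.
set P := scale m.+1; set Pm := scale m.
set a := alpha m.+1 * Nst (vsub (g m.+1) (M m.+1)); set r := N (vsub (x m.+1) (y m.+1)).
have D_pos := D_gt0.
have Pm_ge1 : 1 <= Pm := scale_ge1 m.
have Pm_le : Pm <= P := scale_le_S m.
have inv2D_gt0 : 0 < / (2 * D) by apply: Rinv_0_lt_compat; lra.
have inv_eta : / eta m.+1 = Pm / (2 * D) by rewrite eta_def -[sqrt _]/Pm; field; lra.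
have c_ge0 : 0 <= / eta m.+1 by rewrite inv_eta; apply: Rmult_le_pos; lra.
have Kx := x_in_K Hm1; have Ky := y_in_K (ltnW Hm); have Ky1 := y_in_K Hm.
have TPy := mirror_step_three_point HN HK Hdiff c_ge0 Ku ymin.
have TPx := mirror_step_three_point HN HK Hdiff c_ge0 Ky1 xmin.
rewrite inv_eta in TPx TPy.
have optimism : alpha m.+1 * (inner (x m.+1) (g m.+1) - inner (y m.+1) (g m.+1)
    - inner (x m.+1) (M m.+1) + inner (y m.+1) (M m.+1)) <= a * r.
  rewrite /a /r Rmult_assoc; apply: Rmult_le_compat_l; first exact: pos_INR.
  exact: inner_cross_le_dual_norm.
have b_lb : r ^ 2 / 2 <= bregman Rg gR (y m.+1) (x m.+1).
  by rewrite /r (normB_sym HN); exact: (bregman_ge_half_sq HN HK Hdiff Hsc).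
have b_ub := bregman_le_diam HBD Ky1 Kx.
have B1_ub := bregman_le_diam HBD Ku Ky1.
have Bx_ge0 := bregman_ge0 Kx Ky.
have : (P - Pm) / (2 * D) * bregman Rg gR u (y m.+1)
    - Pm / (2 * D) * bregman Rg gR (y m.+1) (x m.+1) + a * r <= 3 * D * (P - Pm).
  exact: (adaptive_step_bound D_pos (conj Pm_ge1 Pm_le) (scaleS m) B1_ub (conj b_lb b_ub)).
have : 0 <= Pm / (2 * D) * bregman Rg gR (x m.+1) (y m).
  by apply: Rmult_le_pos => //; apply: Rmult_le_pos; lra.
lra.
Qed.

Definition potential u k : R :=
  A k * (f (xbar k) - f u) + scale k / (2 * D) * bregman Rg gR u (y k) - 3 * D * scale k.

Lemma potential_le_init u k : K u -> (k <= T)%N -> potential u k <= potential u 0.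
Proof.
move=> Ku; elim: k => [|m IHm] Hm; first lra.
have := optimistic_round_regret Ku Hm; have := online_to_batch_step Ku Hm.
have := IHm (ltnW Hm); rewrite /potential; lra.
Qed.

Lemma potential_init_le u : K u -> potential u 0 <= D / 2 - 3 * D.
Proof.
move=> Ku; have D_pos := D_gt0.
have B_ub := bregman_le_diam HBD Ku (y_in_K (leq0n T)).
rewrite /potential scale0 /A /= Rmult_0_l Rplus_0_l.
have -> : 1 / (2 * D) * bregman Rg gR u (y 0%N) = bregman Rg gR u (y 0%N) / (2 * D) by field; lra.
suff : bregman Rg gR u (y 0%N) / (2 * D) <= D / 2 by lra.
apply: (Rmult_le_reg_r (2 * D)); first lra.
by rewrite /Rdiv Rmult_assoc Rinv_l; [nra | lra].
Qed.

Lemma weighted_gap_le u : K u -> A T * (f (xbar T) - f u) <= 3 * D * scale T - 5 / 2 * D.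
Proof.
move=> Ku; have := potential_le_init Ku (leqnn T); have := potential_init_le Ku.
have : 0 <= scale T / (2 * D) * bregman Rg gR u (y T).
  apply: Rmult_le_pos; last exact: bregman_ge0 (y_in_K (leqnn T)).
  by apply: Rmult_le_pos; [have := scale_ge1 T; lra | left; apply: Rinv_0_lt_compat; have := D_gt0; lra].
rewrite /potential; lra.
Qed.

Lemma scale_le : scale T <= 1 + 2 * G * INR T * sqrt (INR T).
Proof.
have T_ge0 := pos_INR T; have G_pos := G_ge0.
have sqT := pow2_sqrt (INR T) T_ge0; have sqT_ge0 := sqrt_pos (INR T).
have gap_le : gap_sum T <= INR T * (INR T * (2 * G)) ^ 2.
  apply: sum1_le => t Ht.
  have term_le : alpha t * Nst (vsub (g t) (M t)) <= INR T * (2 * G).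
    apply: Rmult_le_compat; [exact: pos_INR | exact: (dual_norm_ge0 HN HNst) | | exact: gradient_gap_le].
    by apply: le_INR; lia.
  rewrite -Rpow_mult_distr; apply: pow_incr; split=> //.
  by apply: Rmult_le_pos; [exact: pos_INR | exact: (dual_norm_ge0 HN HNst)].
have sq : (2 * G * INR T * sqrt (INR T)) ^ 2 = INR T * (INR T * (2 * G)) ^ 2.
  by rewrite !Rpow_mult_distr sqT; ring.
have : 0 <= 2 * G * INR T * sqrt (INR T) by apply: Rmult_le_pos => //; nra.
have := scale_sq T; have := scale_ge1 T; nra.
Qed.
End UniXGrad.

Lemma rate_of_weighted_gap (T : nat) D P gap : (0 < T)%N -> 0 < D -> 1 <= P ->
  A T * gap <= 3 * D * P - 5 / 2 * D -> gap <= (7 * D * P - D) / INR T ^ 2.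
Proof.
move=> T_gt0 D_pos P_ge1 Hgap.
have T_ge1 : 1 <= INR T by apply: (le_INR 1); lia.
have T2_gt0 : 0 < INR T ^ 2 by nra.
apply: (Rmult_le_reg_r (INR T ^ 2)) => //.
rewrite /Rdiv Rmult_assoc Rinv_l; last lra.
rewrite A_closed in Hgap.
have [gap_le0 | gap_gt0] := Rle_lt_dec gap 0; nra.
Qed.

Lemma rate_le t D G P : 0 < t -> 0 <= D -> P <= 1 + 2 * G * t * sqrt t ->
  (7 * D * P - D) / t ^ 2 <= 6 * D / t ^ 2 + 14 * G * D / sqrt t.
Proof.
move=> t_gt0 D_ge0 P_le.
have s_gt0 : 0 < sqrt t by apply: sqrt_lt_R0.
have t2_gt0 : 0 < t ^ 2 by nra.
have E : 14 * G * D / sqrt t * t ^ 2 = 14 * G * D * t * sqrt t.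
  have := sqrt_sqrt t (Rlt_le _ _ t_gt0).
  by move: (sqrt t) s_gt0 => s s_gt0 <-; field; lra.
apply: (Rmult_le_reg_r _ _ _ t2_gt0).
have inv_t2 : / t ^ 2 * t ^ 2 = 1 by field; lra.
rewrite Rmult_plus_distr_r E /Rdiv !Rmult_assoc inv_t2.
have := Rmult_le_compat_l _ _ _ D_ge0 P_le; lra.
Qed.

Theorem theorem1 (d : nat) (N Nst : vec d -> R) (K : vec d -> Prop)
  (f : vec d -> R) (oracle : vec d -> vec d) (G : R)
  (Rg : vec d -> R) (gR : vec d -> vec d) (D : R) (T : nat) (y0 : vec d)
  (x y ztil xbar M g : nat -> vec d) (eta : nat -> R) :
  is_norm N -> is_dual_norm N Nst ->
  compact_set K -> convex_set K ->
  differentiable_on N K Rg gR -> strongly_convex_on N K Rg ->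
  is_bregman_diameter K Rg gR D ->
  convex_on K f ->
  (forall u, K u -> is_subgradient K f u (oracle u) /\ Nst (oracle u) <= G) ->
  (1 <= T)%N -> K y0 ->
  unixgrad_run Nst K Rg gR D oracle T y0 x y ztil xbar M g eta ->
  (forall u, K u ->
     f (xbar T) - f u <=
     (7 * D * sqrt (1 + sum1 (fun t => alpha t ^ 2 * (Nst (vsub (g t) (M t))) ^ 2) T) - D)
       / (INR T) ^ 2) /\
  (7 * D * sqrt (1 + sum1 (fun t => alpha t ^ 2 * (Nst (vsub (g t) (M t))) ^ 2) T) - D)
       / (INR T) ^ 2
  <= 6 * D / (INR T) ^ 2 + 14 * G * D / sqrt (INR T).
Proof.
move=> HN HNst _ HK Hdiff Hsc HBD _ Horacle T_ge1 Ky0 Hrun.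
have D_pos : 0 < D by case: HBD.
change (sqrt (1 + sum1 _ T)) with (scale Nst M g T).
split=> [u Ku|].
  apply: rate_of_weighted_gap T_ge1 D_pos (scale_ge1 Nst M g T) _.
  exact: (weighted_gap_le HN HNst HK Hdiff Hsc HBD Horacle Ky0 Hrun Ku).
apply: rate_le; first by apply: lt_0_INR; lia.
  by left.
exact: (scale_le HN HNst HK Horacle Ky0 Hrun).
Qed.
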